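(* Let $h\in\mathbb C(s)$ be a rational function whose poles all belong to $\{0,\infty\}$. If $h^{\iota_1}=h$, then there exists $H\in\mathbb C[1/x]$ such that $H(x(s))=h(s)$. Analogously, if $h^{\iota_2}=h$, then there exists $H\in\mathbb C[1/y]$ such that $H(y(s))=h(s)$.
   Context: $x(s),y(s)\in\mathbb C(s)$ are the coordinates of a fixed rational parametrization of the kernel curve of a genus-zero weighted quadrant walk model, with the following known properties: their divisors on $\mathbb P^1$ are $(x)=0+\infty-Q_1-Q_2$ and $(y)=0+\infty-Q_3-Q_4$ for points $Q_i\notin\{0,\infty\}$; there is a real $q\notin\{-1,1\}$ such that, with $\iota_1(s)=1/s$ and $\iota_2(s)=q/s$, the extension $\mathbb C(s)/\mathbb C(x(s))$ is Galois of degree $2$ with group generated by $h\mapsto h^{\iota_1}$, and $\mathbb C(s)/\mathbb C(y(s))$ is Galois of degree $2$ with group generated by $h\mapsto h^{\iota_2}$. Here $h^\tau=h\circ\tau$. *)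

From mathcomp Require Import all_boot all_algebra.
From mathcomp Require Import complex Rstruct fraction generic_quotient.
Set Implicit Arguments. Unset Strict Implicit. Unset Printing Implicit Defensive.
Import GRing.Theory Num.Theory.
Local Open Scope ring_scope.

Definition C : numClosedFieldType := Rdefinitions.R[i].

Definition RF : fieldType := {fraction {poly C}}.

Definition polyF (p : {poly C}) : RF := FracField.tofrac p.
Definition cstF (c : C) : RF := polyF c%:P.
Definition varF : RF := polyF 'X.

Definition numF (h : RF) : {poly C} := \n_(repr h).
Definition denF (h : RF) : {poly C} := \d_(repr h).

Definition pevalF (P : {poly C}) (u : RF) : RF := (map_poly cstF P).[u].

(* composition h o u = h(u(s)) of rational functions (well defined, i.e.
   independent of the representative, whenever u is non-constant) *)
Definition ratcomp (h u : RF) : RF := pevalF (numF h) u / pevalF (denF h) u.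


(* the involution iota_a : s |-> a/s  (iota_1 = 1/s, iota_2 = q/s) *)
Definition iotaF (a : C) : RF := cstF a / varF.

Definition ord_at (h : RF) (a : C) : int := (mup a (numF h))%:Z - (mup a (denF h))%:Z.
Definition ord_inf (h : RF) : int := (size (denF h))%:Z - (size (numF h))%:Z.

Definition divisor_0inf_minus (h : RF) (Q1 Q2 : C) : Prop :=
  h != 0 /\ ord_inf h = 1 /\
  forall a : C, ord_at h a = (a == 0)%:Z - (a == Q1)%:Z - (a == Q2)%:Z.

Definition regular_at (h : RF) (a : C) : Prop :=
  exists p d : {poly C}, ~~ root d a /\ h = polyF p / polyF d.

Definition poles_in_0_inf (h : RF) : Prop := forall a : C, a != 0 -> regular_at h a.

Definition in_Cfield (u h : RF) : Prop := exists G : RF, h = ratcomp G u.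

(* C(s)/C(u) is Galois with group generated by h |-> h^{iota_a} = ratcomp h (iotaF a):
   the automorphism sigma : h |-> h^{iota_a} fixes C(u) pointwise and the fixed
   field of <sigma> is exactly C(u).  (Since sigma is an involution, Artin's
   theorem then gives degree |<sigma>| = 2 when sigma <> id.) *)
Definition galois_by (u : RF) (a : C) : Prop :=
  (forall h : RF, in_Cfield u h -> ratcomp h (iotaF a) = h) /\
  (forall h : RF, ratcomp h (iotaF a) = h -> in_Cfield u h).

From HB Require Import structures.
From mathcomp Require Import all_boot all_algebra.
From mathcomp Require Import complex Rstruct fraction generic_quotient.
From mathcomp Require Import ring zify.
Set Implicit Arguments.
Unset Strict Implicit.
Unset Printing Implicit Defensive.
Import GRing.Theory Num.Theory.
Local Open Scope ring_scope.
Local Open Scope quotient_scope.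

(* Write u for x or y and a for 1 or q. The divisor of u forces
   u = c s / ((s - Qa) (s - Qb)); since u is fixed by iota_a : s |-> a / s, this
   gives Qa Qb = a, hence s + a / s = c / u + (Qa + Qb). A rational function h with
   poles only at 0 and oo is a Laurent polynomial p(s) / s^n. If h is iota_a-invariant,
   subtracting the top coefficient of p times (s + a / s)^n leaves an invariant
   Laurent polynomial whose two extreme coefficients vanish, so by induction on n,
   h is a polynomial in s + a / s, that is, in 1 / u. *)

Section FieldIdentities.
Variable K : fieldType.
Implicit Types x c a A B P t v : K.

Lemma mulr_div_cancel x t v : t != 0 -> x * t / (t * v) = x / v.
Proof. by move=> t0; rewrite invfM -mulrA mulVKf. Qed.

Lemma expr_sqrD_div A t n :
  t != 0 -> (t ^+ 2 + A) ^+ n / t ^+ n = (t + A / t) ^+ n.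
Proof. by move=> t0; rewrite -expr_div_n mulrDl expr2 mulfK. Qed.

Definition quad_frac c A B t := c * t / ((t - A) * (t - B)).

Lemma quad_frac_inv c A B t :
  c != 0 -> t != 0 -> t != A -> t != B -> t + A * B / t = c / quad_frac c A B t + (A + B).
Proof.
rewrite -[t == A]subr_eq0 -[t == B]subr_eq0 => c0 t0 tA tB.
by rewrite /quad_frac; field; rewrite c0 t0 tA tB.
Qed.

Lemma add_div_reciprocal_eq a P t : a != 0 -> t != 0 ->
  t + P / t = a / t + P / (a / t) -> (a - P) * (t ^+ 2 - a) = 0.
Proof.
move=> a0 t0 e.
transitivity ((t + P / t - (a / t + P / (a / t))) * t * a); first by field; rewrite a0 t0.
by rewrite e subrr !mul0r.
Qed.

End FieldIdentities.

Section Multiplicity.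
Variable F : fieldType.

Lemma mupZ (x c : F) (p : {poly F}) : c != 0 -> mup x (c *: p) = mup x p.
Proof. by move=> c0; rewrite -mul_polyC mupMr // rootC. Qed.

Lemma mupXsubC (x y : F) : mup x ('X - y%:P) = (y == x).
Proof. by have := mup_XsubCX 1 x y; rewrite expr1. Qed.

Lemma mupX (x : F) : mup x 'X = (x == 0).
Proof. by have := mupXsubC x 0; rewrite subr0 eq_sym. Qed.

Lemma mupXn (x : F) n : mup x 'X^n = if x == 0 then n else 0%N.
Proof. by have := mup_XsubCX n x 0; rewrite subr0 eq_sym. Qed.

End Multiplicity.

Section ClosedMultiplicity.
Variable F : closedFieldType.

Lemma eq_mup_scale (p q : {poly F}) : p != 0 -> q != 0 ->
  (forall x, mup x p = mup x q) -> p = (lead_coef p / lead_coef q) *: q.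
Proof.
move=> p0 q0 eq_mup.
have lp0 : lead_coef p != 0 by rewrite lead_coef_eq0.
have lq0 : lead_coef q != 0 by rewrite lead_coef_eq0.
have [r pE] := closed_field_poly_normal p; have [t qE] := closed_field_poly_normal q.
have perm_rt : perm_eq r t.
  apply/allP => x _ /=; apply/eqP.
  by have := eq_mup x; rewrite pE qE (mupZ _ _ lp0) (mupZ _ _ lq0) !mu_prod_XsubC.
by rewrite {1}pE (perm_big _ perm_rt) [X in _ = _ *: X]qE scalerA divfK.
Qed.

Lemma roots0_scaleXn (d : {poly F}) : d != 0 -> (forall a, a != 0 -> ~~ root d a) ->
  d = lead_coef d *: 'X^(mup 0 d).
Proof.
move=> d0 nroot; rewrite {1}(@eq_mup_scale d 'X^(mup 0 d)) ?lead_coefXn ?divr1 //.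
  by rewrite -size_poly_eq0 size_polyXn.
by move=> x; rewrite mupXn; case: eqP => [->|/eqP /nroot /mupNroot].
Qed.

End ClosedMultiplicity.

HB.instance Definition _ := GRing.RMorphism.copy polyF (@FracField.tofrac _).
HB.instance Definition _ := GRing.RMorphism.copy cstF (polyF \o polyC).

Lemma polyF_inj : injective polyF.
Proof. by move=> p q /eqP; rewrite /polyF tofrac_eq => /eqP. Qed.

Lemma polyF_eq0 p : (polyF p == 0) = (p == 0).
Proof. by rewrite /polyF tofrac_eq0. Qed.

Lemma cstF_eq0 c : (cstF c == 0) = (c == 0).
Proof. by rewrite /cstF polyF_eq0 polyC_eq0. Qed.

Lemma varF_neq0 : varF != 0.
Proof. by rewrite polyF_eq0 polyX_eq0. Qed.

Lemma polyFC c : polyF c%:P = cstF c. Proof. by []. Qed.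
Lemma polyFX : polyF 'X = varF. Proof. by []. Qed.

Section Evaluation.
Variable u : RF.

Lemma pevalFD p q : pevalF (p + q) u = pevalF p u + pevalF q u.
Proof. by rewrite /pevalF rmorphD hornerD. Qed.
Lemma pevalFB p q : pevalF (p - q) u = pevalF p u - pevalF q u.
Proof. by rewrite /pevalF rmorphB hornerD hornerN. Qed.
Lemma pevalFM p q : pevalF (p * q) u = pevalF p u * pevalF q u.
Proof. by rewrite /pevalF rmorphM hornerM. Qed.
Lemma pevalFXn p n : pevalF (p ^+ n) u = pevalF p u ^+ n.
Proof. by rewrite /pevalF rmorphXn horner_exp. Qed.
Lemma pevalFC c : pevalF c%:P u = cstF c.
Proof. by rewrite /pevalF map_polyC hornerC. Qed.
Lemma pevalF1 : pevalF 1 u = 1.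
Proof. by rewrite /pevalF rmorph1 hornerC. Qed.
Lemma pevalFX : pevalF 'X u = u.
Proof. by rewrite /pevalF map_polyX hornerX. Qed.
Lemma pevalFZ c p : pevalF (c *: p) u = cstF c * pevalF p u.
Proof. by rewrite -mul_polyC pevalFM pevalFC. Qed.
Lemma pevalF_comp p q : pevalF (p \Po q) u = pevalF p (pevalF q u).
Proof. by rewrite /pevalF map_comp_poly horner_comp. Qed.

End Evaluation.

Lemma pevalF_cst p c : pevalF p (cstF c) = cstF p.[c].
Proof. by rewrite /pevalF horner_map. Qed.

Definition pevalFE := (pevalFB, pevalFD, pevalFM, pevalFXn, pevalFZ, pevalFC, pevalF1, pevalFX).

Lemma frac_ratio (r : {ratio {poly C}}) : \pi_RF r = polyF \n_r / polyF \d_r.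
Proof.
rewrite /polyF; unlock FracField.tofrac.
have -> (a b : {ratio {poly C}}) :
    \pi_RF a / \pi_RF b = \pi_RF (FracField.mulf a (FracField.invf b)).
  by rewrite FracField.pi_mul FracField.pi_inv.
apply/eqmodP; rewrite /= FracField.equivfE /= /FracField.mulf /FracField.invf /=.
by rewrite !numden_Ratio ?oner_eq0 ?mulf_neq0 ?oner_eq0 ?denom_ratioP // mulr1 mul1r mulrC.
Qed.

Lemma numdenF (h : RF) : h = polyF (numF h) / polyF (denF h).
Proof. by rewrite -frac_ratio /numF /denF reprK. Qed.

Lemma denF_neq0 (h : RF) : denF h != 0.
Proof. exact: denom_ratioP. Qed.

Lemma numF_neq0 h : h != 0 -> numF h != 0.
Proof. by apply: contra_neq => n0; rewrite (numdenF h) n0 rmorph0 mul0r. Qed.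

Definition nonconst (u : RF) := forall c, u != cstF c.

Lemma pevalF_neq0 u p : nonconst u -> p != 0 -> pevalF p u != 0.
Proof.
move=> u_nc p0; have [r ->] := closed_field_poly_normal p.
rewrite pevalFZ; apply: mulf_neq0; first by rewrite cstF_eq0 lead_coef_eq0.
elim: r => [|z r IH]; first by rewrite big_nil pevalF1 oner_neq0.
rewrite big_cons pevalFM; apply: mulf_neq0 IH.
by rewrite pevalFB pevalFX pevalFC subr_eq0; apply: u_nc.
Qed.

Lemma ratcomp_frac h u p d : nonconst u -> d != 0 -> h = polyF p / polyF d ->
  ratcomp h u = pevalF p u / pevalF d u.
Proof.
move=> u_nc d0 hE; have hd0 := denF_neq0 h.
have cross : numF h * d = p * denF h.
  apply: polyF_inj; rewrite !rmorphM; apply/eqP.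
  by rewrite -eqr_div ?polyF_eq0 // -hE -numdenF.
apply/eqP; rewrite /ratcomp eqr_div ?pevalF_neq0 //.
by rewrite -!pevalFM cross.
Qed.

Lemma ratcomp_var u : nonconst u -> ratcomp varF u = u.
Proof.
move=> u_nc; have varE : varF = polyF 'X / polyF 1 by rewrite rmorph1 divr1.
by rewrite (ratcomp_frac u_nc (oner_neq0 _) varE) pevalFX pevalF1 divr1.
Qed.

Lemma ratcomp_cst h c : ratcomp h (cstF c) = cstF ((numF h).[c] / (denF h).[c]).
Proof. by rewrite /ratcomp !pevalF_cst fmorph_div. Qed.

Lemma iotaF_nonconst a : a != 0 -> nonconst (iotaF a).
Proof.
move=> a0 c; apply/negP => /eqP iota_c.
have : cstF a = cstF c * varF by rewrite -iota_c divfK ?varF_neq0.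
rewrite -polyFX -!polyFC -rmorphM => /polyF_inj /(congr1 (coefp 0)).
rewrite /= coefC eqxx coefCM coefX mulr0 => a_eq0.
by move: a0; rewrite a_eq0 eqxx.
Qed.

Lemma iota_fixed_neq0 u a : nonconst u -> ratcomp u (iotaF a) = u -> a != 0.
Proof.
move=> u_nc u_fixed; apply/eqP => a0.
have /eqP := u_nc ((numF u).[0] / (denF u).[0]); apply.
by rewrite -{1}u_fixed a0 /iotaF rmorph0 mul0r -(rmorph0 cstF) ratcomp_cst.
Qed.

Lemma galois_by_fixed u a : nonconst u -> galois_by u a -> ratcomp u (iotaF a) = u.
Proof. by move=> u_nc [fix_Cu _]; apply: fix_Cu; exists varF; rewrite ratcomp_var. Qed.

Lemma polyF_nonconst (p : {poly C}) : (1 < size p)%N -> nonconst (polyF p).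
Proof.
move=> p_gt1 c; apply/negP => /eqP /polyF_inj pE.
by move: p_gt1; rewrite pE size_polyC; case: (c != 0).
Qed.

Lemma varF_nonconst : nonconst varF.
Proof. by apply: polyF_nonconst; rewrite size_polyX. Qed.

Lemma coprime_frac h : exists n d, [/\ coprimep n d, d != 0 & h = polyF n / polyF d].
Proof.
set n := numF h; set d := denF h; set g := gcdp n d.
have d0 : d != 0 := denF_neq0 h.
have g0 : g != 0 by rewrite gcdp_eq0 negb_and d0 orbT.
have dE : d = d %/ g * g by rewrite divpK ?dvdp_gcdr.
have dg0 : d %/ g != 0 by apply: contra_neq d0 => dg0; rewrite dE dg0 mul0r.
have nE : n = n %/ g * g by rewrite divpK ?dvdp_gcdl.
exists (n %/ g), (d %/ g); split.
- by apply: coprimep_div_gcd; rewrite d0 orbT.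
- exact: dg0.
rewrite (numdenF h) -/n -/d {1}nE {1}dE !rmorphM /= invfM mulrACA divff ?mulr1 //.
by rewrite polyF_eq0.
Qed.

Lemma coprime_frac_den_dvdp n d p e : coprimep n d -> d != 0 -> e != 0 ->
  polyF n / polyF d = polyF p / polyF e -> d %| e.
Proof.
move=> cop d0 e0 /eqP; rewrite eqr_div ?polyF_eq0 // -!rmorphM => /eqP /polyF_inj cross.
have cop' : coprimep d n by rewrite coprimep_sym.
by rewrite -(Gauss_dvdpr _ cop') cross dvdp_mull ?dvdpp.
Qed.

Lemma laurent_of_poles h : poles_in_0_inf h -> exists p m, h = polyF p / varF ^+ m.
Proof.
move=> poles_h; have [n [d [cop d0 hE]]] := coprime_frac h.
have nroot a : a != 0 -> ~~ root d a.
  move=> /poles_h [p [e [nre he]]].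
  have e0 : e != 0 by apply: contraNneq nre => ->; rewrite root0.
  have dvd_de : d %| e.
    by apply: (@coprime_frac_den_dvdp n d p e cop d0 e0); rewrite -hE -he.
  exact: contra (root_dvdp dvd_de) nre.
exists ((lead_coef d)^-1 *: n), (mup 0 d).
rewrite hE {1}(roots0_scaleXn d0 nroot) -!mul_polyC !rmorphM rmorphXn /= !polyFC polyFX.
by rewrite fmorphV invfM mulrA (mulrC (polyF n)).
Qed.

Lemma quad_fracF c A B : quad_frac (cstF c) (cstF A) (cstF B) varF =
  polyF (c *: 'X) / polyF (('X - A%:P) * ('X - B%:P)).
Proof. by rewrite /quad_frac -mul_polyC !rmorphM !rmorphB /= polyFX !polyFC. Qed.

Lemma divisor_shape u Qa Qb : divisor_0inf_minus u Qa Qb ->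
  exists2 c, c != 0 & u = quad_frac (cstF c) (cstF Qa) (cstF Qb) varF.
Proof.
move=> [u0 [_ ord_u]].
set n := numF u; set d := denF u; set D := ('X - Qa%:P) * ('X - Qb%:P).
have n0 : n != 0 := numF_neq0 u0.
have d0 : d != 0 := denF_neq0 u.
have X0 : 'X != 0 :> {poly C} by rewrite polyX_eq0.
have Xa0 : 'X - Qa%:P != 0 by rewrite polyXsubC_eq0.
have Xb0 : 'X - Qb%:P != 0 by rewrite polyXsubC_eq0.
have D0 : D != 0 := mulf_neq0 Xa0 Xb0.
have nD0 : n * D != 0 := mulf_neq0 n0 D0.
have dX0 : d * 'X != 0 := mulf_neq0 d0 X0.
have mup_eq x : mup x (n * D) = mup x (d * 'X).
  rewrite (mupM _ n0 D0) (mupM _ d0 X0) (mupM _ Xa0 Xb0) !mupXsubC mupX.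
  move: (ord_u x); rewrite /ord_at -/n -/d (eq_sym Qa) (eq_sym Qb).
  move: (mup x n) (mup x d) (x == 0) (x == Qa) (x == Qb) => i j b0 ba bb; clear; lia.
have nDE := eq_mup_scale nD0 dX0 mup_eq.
set k := lead_coef (n * D) / lead_coef (d * 'X) in nDE.
exists k.
  by apply: contra_neq nD0 => k0; rewrite nDE k0 scale0r.
apply/eqP; rewrite quad_fracF (numdenF u) -/n -/d eqr_div ?polyF_eq0 //; apply/eqP.
by rewrite -!rmorphM nDE mulrC scalerAl.
Qed.

Section Shape.

Variables (Qa Qb c : C) (u : RF).
Hypotheses (c0 : c != 0) (uE : u = quad_frac (cstF c) (cstF Qa) (cstF Qb) varF).

Lemma shape_nonconst : nonconst u.
Proof.
move=> r; apply/negP => /eqP; rewrite uE quad_fracF.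
set D := ('X - Qa%:P) * ('X - Qb%:P).
have D0 : polyF D != 0 by rewrite polyF_eq0; apply: mulf_neq0; rewrite polyXsubC_eq0.
rewrite -[cstF r]divr1 => /eqP; rewrite eqr_div ?oner_neq0 // mulr1 -polyFC -rmorphM mul_polyC.
move=> /eqP /polyF_inj /(congr1 (fun p : {poly C} => size p)) /=.
rewrite size_scale // size_polyX.
have [->|r0] := eqVneq r 0; first by rewrite scale0r size_poly0.
by rewrite size_scale // size_mul ?polyXsubC_eq0 // !size_XsubC.
Qed.

Lemma shape_ratcomp t : nonconst t -> ratcomp u t = quad_frac (cstF c) (cstF Qa) (cstF Qb) t.
Proof.
move=> t_nc; rewrite (ratcomp_frac t_nc _ (etrans uE (quad_fracF c Qa Qb))).
  by rewrite /quad_frac !pevalFE.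
by apply: mulf_neq0; rewrite polyXsubC_eq0.
Qed.

Lemma shape_add_div t : nonconst t -> t != 0 ->
  t + cstF (Qa * Qb) / t = cstF c / ratcomp u t + cstF (Qa + Qb).
Proof.
move=> t_nc t0; rewrite shape_ratcomp // !rmorphM rmorphD /=.
apply: quad_frac_inv; [by rewrite cstF_eq0 | exact: t0 | exact: t_nc | exact: t_nc].
Qed.

Lemma shape_var_add_iota : varF + iotaF (Qa * Qb) = cstF c / u + cstF (Qa + Qb).
Proof.
have := shape_add_div varF_nonconst varF_neq0.
by rewrite (shape_ratcomp varF_nonconst) -uE.
Qed.

Lemma shape_iota_fixed a : a != 0 -> ratcomp u (iotaF a) = u -> Qa * Qb = a.
Proof.
move=> a0 u_fixed.
have aF0 : cstF a != 0 by rewrite cstF_eq0.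
have iota0 : iotaF a != 0 by apply: mulf_neq0 aF0 _; rewrite invr_eq0; exact: varF_neq0.
have := shape_add_div (iotaF_nonconst a0) iota0.
rewrite u_fixed -shape_var_add_iota => /esym /(add_div_reciprocal_eq aF0 varF_neq0) /eqP.
rewrite mulf_eq0 => /orP [|]; first by rewrite -rmorphB cstF_eq0 subr_eq0 eq_sym => /eqP.
rewrite -polyFX -rmorphXn -polyFC -rmorphB polyF_eq0 => /eqP X2a.
by have := size_XnsubC a (ltn0Sn 1); rewrite X2a size_poly0.
Qed.

End Shape.

Definition iota_sym (a : C) (n : nat) (p : {poly C}) :=
  pevalF p (iotaF a) / iotaF a ^+ n = polyF p / varF ^+ n.

Section IotaSym.

Variable a : C.
Hypothesis a0 : a != 0.

Let aF0 : cstF a != 0.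
Proof. by rewrite cstF_eq0. Qed.

Let iota0 : iotaF a != 0.
Proof. apply: mulf_neq0 aF0 _; rewrite invr_eq0; exact: varF_neq0. Qed.

Lemma iota_sym_of_fixed n p :
  ratcomp (polyF p / varF ^+ n) (iotaF a) = polyF p / varF ^+ n -> iota_sym a n p.
Proof.
have Xn0 : 'X^n != 0 :> {poly C} by rewrite monic_neq0 ?monicXn.
have hE : polyF p / varF ^+ n = polyF p / polyF 'X^n by rewrite rmorphXn.
by rewrite (ratcomp_frac (iotaF_nonconst a0) Xn0 hE) pevalFXn pevalFX.
Qed.

Lemma iota_symB n p q b : iota_sym a n p -> iota_sym a n q -> iota_sym a n (p - b *: q).
Proof.
rewrite /iota_sym => Sp Sq.
by rewrite pevalFB pevalFZ rmorphB -mul_polyC rmorphM /= polyFC !mulrBl -!mulrA Sp Sq.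
Qed.

Lemma iota_sym_divX n q : iota_sym a n.+1 (q * 'X) -> iota_sym a n q.
Proof.
rewrite /iota_sym pevalFM pevalFX rmorphM /= polyFX !exprS.
by rewrite (mulr_div_cancel _ _ iota0) (mulr_div_cancel _ _ varF_neq0).
Qed.

Lemma X2addC_laurent n : polyF (('X^2 + a%:P) ^+ n) / varF ^+ n = (varF + iotaF a) ^+ n.
Proof.
by rewrite rmorphXn rmorphD rmorphXn /= polyFX polyFC (expr_sqrD_div _ _ varF_neq0).
Qed.

Lemma iota_sym_X2addC n : iota_sym a n (('X^2 + a%:P) ^+ n).
Proof.
rewrite /iota_sym X2addC_laurent !pevalFE (expr_sqrD_div _ _ iota0).
by rewrite /iotaF (divKf aF0) addrC.
Qed.

Lemma iota_sym_coef0 n (p : {poly C}) : (size p <= n.*2.+1)%N -> iota_sym a n p ->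
  a ^+ n * p`_0 = p`_(n.*2) * a ^+ n.*2.
Proof.
move=> sp Sp.
set R := \sum_(i < n.*2.+1) (p`_i * a ^+ i) *: 'X^(n.*2 - i).
have R_eval : pevalF p (iotaF a) * varF ^+ n.*2 = polyF R.
  have sp_map : (size (map_poly cstF p) <= n.*2.+1)%N by rewrite size_map_poly.
  rewrite /pevalF (horner_coef_wide _ sp_map).
  rewrite mulr_suml rmorph_sum; apply: eq_bigr => i _.
  have le_i2n : (i <= n.*2)%N by rewrite -ltnS.
  rewrite coef_map -mul_polyC !rmorphM !rmorphXn /= !polyFC polyFX -!mulrA; congr (_ * _).
  have -> : varF ^+ n.*2 = varF ^+ (n.*2 - i) * varF ^+ i by rewrite -exprD subnK.
  by rewrite mulrCA -exprMn /iotaF (divfK varF_neq0) mulrC.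
have RE : R = (a ^+ n)%:P * p.
  apply: polyF_inj; rewrite -R_eval rmorphM /= polyFC rmorphXn /= -addnn exprD mulrA.
  move: Sp; rewrite /iota_sym {2}/iotaF expr_div_n invf_div mulrA => /eqP.
  rewrite eqr_div => [/eqP ->||]; [exact: mulrC | exact: expf_neq0 aF0 | exact: expf_neq0 varF_neq0].
have := congr1 (coefp 0) RE; rewrite /= coefCM coef_sum => <-.
rewrite big_ord_recr /= subnn coefZ coefXn eqxx mulr1 big1 ?add0r // => i _.
by rewrite coefZ coefXn eq_sym subn_eq0 leqNgt ltn_ord mulr0.
Qed.

Lemma iota_sym_peel n (p : {poly C}) : (size p <= (n.+1).*2.+1)%N -> iota_sym a n.+1 p ->
  exists2 q : {poly C}, (size q <= n.*2.+1)%N /\ iota_sym a n q &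
    p = q * 'X + p`_(n.+1).*2 *: ('X^2 + a%:P) ^+ n.+1.
Proof.
move=> sp Sp.
set b := p`_(n.+1).*2; set W := ('X^2 + a%:P) ^+ n.+1; set p' := p - b *: W.
have W_monic : W \is monic by rewrite monic_exp // monicXnaddC.
have sW : (size W).-1 = (n.+1).*2 by rewrite size_exp size_XnaddC // mul2n.
have sp' : (size p' <= (n.+1).*2.+1)%N.
  rewrite (leq_trans (size_polyD _ _)) // geq_max sp size_polyN.
  by rewrite (leq_trans (size_scale_leq _ _)) // -sW leqSpred.
have W_top : W`_(n.+1).*2 = 1 by rewrite -sW -lead_coefE (monicP W_monic).
have p'_top : p'`_(n.+1).*2 = 0 by rewrite coefB coefZ W_top mulr1 subrr.
have Sp' : iota_sym a n.+1 p' := iota_symB b Sp (iota_sym_X2addC n.+1).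
have p'_0 : p'`_0 = 0.
  have := iota_sym_coef0 sp' Sp'; rewrite p'_top mul0r => /eqP.
  by rewrite mulf_eq0 expf_eq0 (negbTE a0) andbF orFb => /eqP.
have [q p'E] : exists q, p' = q * 'X.
  have /factor_theorem [q ->] : root p' 0 by rewrite rootE horner_coef0 p'_0.
  by exists q; rewrite subr0.
have q_top : q`_n.*2.+1 = 0 by move: p'_top; rewrite p'E doubleS coefMX.
have sq2 : (size q <= n.*2.+2)%N.
  have [->|q0] := eqVneq q 0; first by rewrite size_poly0.
  by move: sp'; rewrite p'E size_mulX // doubleS.
exists q; last by rewrite -p'E subrK.
split; last by apply: iota_sym_divX; rewrite -p'E.
apply/leq_sizeP => j; rewrite leq_eqVlt => /orP [/eqP <- //|].
exact: (leq_sizeP _ _ sq2).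
Qed.

Lemma iota_sym_laurent n (p : {poly C}) : (size p <= n.*2.+1)%N -> iota_sym a n p ->
  exists P : {poly C}, polyF p / varF ^+ n = pevalF P (varF + iotaF a).
Proof.
elim: n p => [|n IH] p sp Sp.
  by exists (p`_0)%:P; rewrite {1}(size1_polyC sp) expr0 divr1 pevalFC.
have [q [sq Sq] pE] := iota_sym_peel sp Sp.
have [P PE] := IH q sq Sq.
exists (P + p`_(n.+1).*2 *: 'X^(n.+1)).
rewrite {1}pE rmorphD mulrDl rmorphM /= polyFX exprS (mulr_div_cancel _ _ varF_neq0) PE.
rewrite -mul_polyC rmorphM /= polyFC -mulrA -exprS X2addC_laurent.
by rewrite pevalFD pevalFZ pevalFXn pevalFX.
Qed.

End IotaSym.

Lemma divisor_nonconst u Qa Qb : divisor_0inf_minus u Qa Qb -> nonconst u.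
Proof. by case/divisor_shape => c c0 /(shape_nonconst c0). Qed.

Lemma iota_fixed_poly_inv u Qa Qb a h :
  divisor_0inf_minus u Qa Qb -> ratcomp u (iotaF a) = u ->
  poles_in_0_inf h -> ratcomp h (iotaF a) = h -> exists H : {poly C}, h = pevalF H u^-1.
Proof.
move=> du u_fixed poles_h h_fixed.
have [c c0 uE] := divisor_shape du.
have a0 := iota_fixed_neq0 (shape_nonconst c0 uE) u_fixed.
have [p [m hE]] := laurent_of_poles poles_h.
set k := size p.
(* Pad p so that its degree fits the window s^-N .. s^N, N = k + m. *)
have hE' : h = polyF (p * 'X^k) / varF ^+ (k + m).
  by rewrite hE rmorphM rmorphXn /= polyFX exprD (mulr_div_cancel _ _ (expf_neq0 _ varF_neq0)).
have sp : (size (p * 'X^k)%R <= (k + m).*2.+1)%N.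
  have [->|p0] := eqVneq p 0; first by rewrite mul0r size_poly0.
  rewrite size_mulXn // -/k; lia.
have Sp : iota_sym a (k + m) (p * 'X^k) by apply: (iota_sym_of_fixed a0); rewrite -hE'.
have [P PE] := iota_sym_laurent a0 sp Sp.
exists (P \Po (c *: 'X + (Qa + Qb)%:P)).
rewrite pevalF_comp pevalFD pevalFZ pevalFX pevalFC hE' PE.
by rewrite -(shape_iota_fixed c0 uE a0 u_fixed) (shape_var_add_iota c0 uE).
Qed.

Theorem lemma2p4 (x y : RF) (Q1 Q2 Q3 Q4 q : C) :
  Q1 != 0 -> Q2 != 0 -> Q3 != 0 -> Q4 != 0 ->
  divisor_0inf_minus x Q1 Q2 -> divisor_0inf_minus y Q3 Q4 ->
  q \is Num.real -> q != 1 -> q != -1 ->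
  galois_by x 1 -> galois_by y q ->
  forall h : RF, poles_in_0_inf h ->
    (ratcomp h (iotaF 1) = h -> exists H : {poly C}, h = pevalF H x^-1) /\
    (ratcomp h (iotaF q) = h -> exists H : {poly C}, h = pevalF H y^-1).
Proof.
(* Qa Qb = a is forced by iota-invariance. *)
move=> _ _ _ _ dx dy _ _ _ gx gy h poles_h; split.
- exact: iota_fixed_poly_inv dx (galois_by_fixed (divisor_nonconst dx) gx) poles_h.
- exact: iota_fixed_poly_inv dy (galois_by_fixed (divisor_nonconst dy) gy) poles_h.
Qed.
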